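(* Under the hypotheses $\frac{d\lambda}{dt}=\alpha_0\lambda$ ($\alpha_0\ne0$) and $\frac{d}{dt}m_j=\alpha_0jm_j+\alpha_1m_{j+1}+\alpha_2m_{j-1}$ for all $j\in\mathbb Z$, with all required inverses existing, the recurrence coefficients satisfy the noncommutative nonisospectral mixed relativistic Toda lattice: $$\frac{d}{dt}a_n=\alpha_0a_n+\alpha_1(-a_{n+1}a_n+a_na_{n-1}+b_na_n-a_nb_{n-1})+\alpha_2(b_n^{-1}a_n-a_nb_{n-1}^{-1}),$$ $$\frac{d}{dt}b_n=\alpha_0b_n+\alpha_1(b_na_n-a_{n+1}b_n)+\alpha_2(b_{n+1}^{-1}a_{n+1}-a_nb_{n-1}^{-1}).$$ The boundary conventions are $a_0=0$ and $P_{-1}=0$.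
   Context: $R$ is a skew field containing moments $m_i(t)$, $i\in\mathbb Z$, with an involution $*$ and a derivation $\frac{d}{dt}$. The pairing is $\langle\sum a_i\lambda^i,\sum b_j\lambda^j\rangle=\sum a_im_{i-j}b_j^*$. Let $\Lambda_{n-1}=(m_{i-j})_{i,j=0}^{n-1}$ (invertible) and $\theta_n=(m_n,\dots,m_1)$. The polynomials are $P_n=\lambda^n-\theta_n\Lambda_{n-1}^{-1}(1,\dots,\lambda^{n-1})^T$, the monic Laurent biorthogonal polynomials. Further, $$H_n=m_0-\theta_n\Lambda_{n-1}^{-1}(m_{-n},\dots,m_{-1})^T,\qquad \tau_n=m_{n+1}-\theta_n\Lambda_{n-1}^{-1}(m_1,\dots,m_n)^T,$$ $$a_n=-\tau_n\tau_{n-1}^{-1},\qquad b_n=a_nH_{n-1}H_n^{-1}.$$ The recurrence coefficients satisfy $\lambda(P_n+a_nP_{n-1})=P_{n+1}+b_nP_n$. The spectral parameter $\lambda=\lambda(t)$ is time-dependent. *)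

(* Matrix inverses over a noncommutative
   ring are not available in MathComp (invmx needs commutativity), so the
   inverses of the Toeplitz moment matrices are given as a parameter Linv
   together with the two-sided inverse property (inverses are unique). *)
From HB Require Import structures.
From mathcomp Require Import all_boot all_order all_algebra.
Set Implicit Arguments. Unset Strict Implicit. Unset Printing Implicit Defensive.
Import Order.TTheory GRing.Theory Num.Theory.
Local Open Scope ring_scope.

Section LBP.
Variables (R : unitRingType) (m : int -> R) (Linv : forall n : nat, 'M[R]_n).

(* Lambda_{n-1} = (m_{i-j})_{i,j=0}^{n-1}, an n x n matrix *)
Definition Lam (n : nat) : 'M[R]_n :=
  \matrix_(i < n, j < n) m ((i : nat)%:Z - (j : nat)%:Z).

Definition theta (n : nat) : 'rV[R]_n := \row_(k < n) m (n%:Z - (k : nat)%:Z).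

Definition colH (n : nat) : 'cV[R]_n := \col_(k < n) m ((k : nat)%:Z - n%:Z).

Definition colT (n : nat) : 'cV[R]_n := \col_(k < n) m ((k : nat)%:Z + 1).

Definition Hn (n : nat) : R :=
  m 0 - (theta n *m Linv n *m colH n) 0 0.

Definition taun (n : nat) : R :=
  m (n%:Z + 1) - (theta n *m Linv n *m colT n) 0 0.

Definition an (n : nat) : R :=
  if n is k.+1 then - taun k.+1 * (taun k)^-1 else 0.

(* b_n = a_n H_{n-1} H_n^{-1} for n >= 1; b_0 = m_1 m_0^{-1} = tau_0 H_0^{-1},
   the value forced by the recurrence lambda P_0 = P_1 + b_0 P_0 (P_{-1} = 0). *)
Definition bn (n : nat) : R :=
  if n is k.+1 then an k.+1 * Hn k * (Hn k.+1)^-1 else taun 0 * (Hn 0)^-1.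

End LBP.

From HB Require Import structures.
From mathcomp Require Import all_boot all_order all_algebra.
From mathcomp Require Import zify.
Import Order.TTheory GRing.Theory Num.Theory.
Local Open Scope ring_scope.

(* Write <p, j> = sum_i p_i m_(i-j) for the pairing of p with lambda^j.
   P_k is the unique monic polynomial of degree k orthogonal to lambda^0, ...,
   lambda^(k-1) (uniqueness is the invertibility of Lambda_(k-1)), and
   <P_k, k> = H_k, <P_k, -1> = tau_k.  Uniqueness gives the recurrence and,
   because the moment flow only shifts moments by one, an explicit formula
   for the time derivative of the coefficients of P_k: a combination of
   lambda P_(k-1) - P_k, P_(k-1) and the Euler operator lambda d/dlambda
   applied to P_k, the latter coming from d(lambda)/dt = alpha_0 lambda.
   Pairing it with lambda^(-1) and lambda^k gives the logarithmic derivatives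
   of tau_k and H_k, and the Toda equations for a_n = - tau_n tau_(n-1)^-1
   and b_n = a_n H_(n-1) H_n^-1 follow by the quotient rule. *)

Lemma coefX_deriv (R : nzRingType) (p : {poly R}) i : ('X * p^`())`_i = p`_i *+ i.
Proof. by rewrite coefXM; case: i => [|i]; rewrite ?mulr0n // coef_deriv. Qed.

Lemma size_polyD_leq (R : nzRingType) (p q : {poly R}) k :
  (size p <= k)%N -> (size q <= k)%N -> (size (p + q)%R <= k)%N.
Proof. by move=> pk qk; rewrite (leq_trans (size_polyD _ _)) // geq_max pk. Qed.

Lemma size_polyB_leq (R : nzRingType) (p q : {poly R}) k :
  (size p <= k)%N -> (size q <= k)%N -> (size (p - q)%R <= k)%N.
Proof. by move=> pk qk; rewrite size_polyD_leq ?size_polyN. Qed.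

Section Derivation.
Context {R : unitRingType} {d : R -> R}.
Hypothesis dD : forall x y, d (x + y) = d x + d y.
Hypothesis dM : forall x y, d (x * y) = d x * y + x * d y.

Lemma d0 : d 0 = 0.
Proof. by apply: (addrI (d 0)); rewrite -dD !addr0. Qed.

Lemma d1 : d 1 = 0.
Proof. by have := dM 1 1; rewrite !mulr1 mul1r -{1}[d 1]addr0 => /addrI <-. Qed.

Lemma dN x : d (- x) = - d x.
Proof. by apply: (addrI (d x)); rewrite -dD !subrr d0. Qed.

Lemma d_sum I r (P : pred I) (F : I -> R) :
  d (\sum_(i <- r | P i) F i) = \sum_(i <- r | P i) d (F i).
Proof. exact: (big_morph d dD d0). Qed.

Lemma d_natr n : d n%:R = 0.
Proof. by elim: n => [|n IHn]; rewrite ?d0 // mulrS dD d1 IHn addr0. Qed.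

Lemma dV x : x \is a GRing.unit -> d x^-1 = - (x^-1 * d x * x^-1).
Proof.
move=> ux; have := d1; rewrite -(mulVr ux) dM => /eqP; rewrite addr_eq0.
by move=> /eqP/(congr1 (fun y => y * x^-1)); rewrite mulrK // mulNr.
Qed.

Lemma d_mulV x y u v : y \is a GRing.unit ->
  d x = u * x -> d y = v * y -> d (x / y) = u * (x / y) - (x / y) * v.
Proof.
by move=> uy dx dy; rewrite dM dV // dx dy mulrN !mulrA mulrK.
Qed.

End Derivation.

Section Moments.
Variables (R : unitRingType) (m : int -> R) (Linv : forall n : nat, 'M[R]_n).

Definition mpair (p : {poly R}) (j : int) : R :=
  \sum_(i < size p) p`_i * m (i%:Z - j).

Lemma mpair_widen K (p : {poly R}) j : (size p <= K)%N ->
  mpair p j = \sum_(i < K) p`_i * m (i%:Z - j).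
Proof.
move=> pK; rewrite /mpair (big_ord_widen K (fun i => p`_i * m (i%:Z - j))) //.
rewrite big_mkcond; apply: eq_bigr => i _ /=.
by case: ltnP => // /(nth_default 0) ->; rewrite mul0r.
Qed.

Lemma mpairD (p q : {poly R}) j : mpair (p + q) j = mpair p j + mpair q j.
Proof.
set K := maxn (size p) (size q).
rewrite !(@mpair_widen K) ?leq_maxl ?leq_maxr ?(leq_trans (size_polyD _ _)) //.
by rewrite -big_split; apply: eq_bigr => i _; rewrite coefD mulrDl.
Qed.

Lemma mpairN (p : {poly R}) j : mpair (- p) j = - mpair p j.
Proof.
rewrite /mpair size_polyN -sumrN.
by apply: eq_bigr => i _; rewrite coefN mulNr.
Qed.

Lemma mpairB (p q : {poly R}) j : mpair (p - q) j = mpair p j - mpair q j.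
Proof. by rewrite mpairD mpairN. Qed.

Lemma mpairZ c (p : {poly R}) j : mpair (c *: p) j = c * mpair p j.
Proof.
rewrite (@mpair_widen (size p)) ?size_scale_leq // /mpair mulr_sumr.
by apply: eq_bigr => i _; rewrite coefZ mulrA.
Qed.

Lemma mpair_sum n (F : 'I_n -> {poly R}) j :
  mpair (\sum_(l < n) F l) j = \sum_(l < n) mpair (F l) j.
Proof.
apply: (big_morph (fun p => mpair p j)) => [p q|]; first exact: mpairD.
by rewrite /mpair size_poly0 big_ord0.
Qed.

Lemma mpairXn k j : mpair 'X^k j = m (k%:Z - j).
Proof.
rewrite /mpair size_polyXn big_ord_recr /= coefXn eqxx mul1r big1 ?add0r //.
by move=> i _; rewrite coefXn (ltn_eqF (ltn_ord i)) mul0r.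
Qed.

Lemma mpairXM (p : {poly R}) j : mpair ('X * p) j = mpair p (j - 1).
Proof.
have sXp : (size ('X * p)%R <= (size p).+1)%N.
  by rewrite (leq_trans (size_polyMleq _ _)) ?size_polyX.
rewrite (@mpair_widen (size p).+1 _ _ sXp) big_ord_recl coefXM /= mul0r add0r.
by apply: eq_bigr => i _; rewrite coefXM /= /bump /= add1n; congr (_ * m _); lia.
Qed.

Hypothesis LinvP : forall n, Lam m n *m Linv n = 1%:M /\ Linv n *m Lam m n = 1%:M.

Lemma mpair_eq0 k (p : {poly R}) : (size p <= k)%N ->
  (forall j : nat, (j < k)%N -> mpair p j = 0) -> p = 0.
Proof.
move=> pk p_orth; pose v := \row_(l < k) p`_l.
have vLam : v *m Lam m k = 0.
  apply/rowP => j; rewrite [RHS]mxE -(p_orth j) // (@mpair_widen k p _ pk) mxE.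
  by apply: eq_bigr => l _; rewrite !mxE.
have v0 : v = 0 by rewrite -[v]mulmx1 -(proj1 (LinvP k)) mulmxA vLam mul0mx.
apply/polyP => i; rewrite coef0; case: (ltnP i k) => [ik|]; last first.
  by move=> ki; apply: nth_default; apply: leq_trans ki.
by have := congr1 (fun w : 'rV_k => w 0 (Ordinal ik)) v0; rewrite !mxE.
Qed.

Lemma mpair_inj k (p q : {poly R}) : (size p <= k)%N -> (size q <= k)%N ->
  (forall j : nat, (j < k)%N -> mpair p j = mpair q j) -> p = q.
Proof.
move=> pk qk e; apply/eqP; rewrite -subr_eq0; apply/eqP/(@mpair_eq0 k).
  exact: size_polyB_leq.
by move=> j jk; rewrite mpairB e ?subrr.
Qed.

Fact lbp_key : unit. Proof. by []. Qed.
Definition lbp := locked_with lbp_key (fun k : nat =>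
  'X^k - \sum_(l < k) (theta m k *m Linv k) 0 l *: 'X^l : {poly R}).
Canonical lbp_unlockable := [unlockable fun lbp].

Lemma coef_lbp_ge k i : (k <= i)%N -> (lbp k)`_i = (i == k)%:R.
Proof.
move=> ki; rewrite unlock coefB coefXn coef_sum big1 ?subr0 // => l _.
by rewrite coefZ coefXn gtn_eqF ?mulr0 // (leq_trans (ltn_ord l)).
Qed.

Lemma size_lbp k : (size (lbp k) <= k.+1)%N.
Proof. by apply/leq_sizeP => i ki; rewrite coef_lbp_ge 1?ltnW // gtn_eqF. Qed.

Lemma mpair_lbp k j : mpair (lbp k) j =
  m (k%:Z - j) - \sum_(l < k) (theta m k *m Linv k) 0 l * m (l%:Z - j).
Proof.
rewrite unlock mpairB mpairXn mpair_sum; congr (_ - _).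
by apply: eq_bigr => l _; rewrite mpairZ mpairXn.
Qed.

Lemma mpair_lbp_lt k (j : nat) : (j < k)%N -> mpair (lbp k) j = 0.
Proof.
move=> jk; rewrite mpair_lbp; apply/eqP; rewrite subr_eq0; apply/eqP.
have := congr1 (fun w : 'rV_k => w 0 (Ordinal jk)) (mulmx1 (theta m k)).
rewrite -(proj2 (LinvP k)) mulmxA !mxE => <-.
by apply: eq_bigr => l _; rewrite !mxE.
Qed.

Lemma mpair_lbp_diag k : mpair (lbp k) k = Hn m Linv k.
Proof.
rewrite mpair_lbp subrr /Hn [in RHS]mxE; congr (_ - _).
by apply: eq_bigr => l _; rewrite !mxE.
Qed.

Lemma mpair_lbpN1 k : mpair (lbp k) (-1) = taun m Linv k.
Proof.
rewrite mpair_lbp opprK /taun [in RHS]mxE; congr (_ - _).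
by apply: eq_bigr => l _; rewrite !mxE.
Qed.

Lemma size_XlbpB k : (size ('X * lbp k - lbp k.+1)%R <= k.+1)%N.
Proof.
apply/leq_sizeP => -[//|i] ki.
by rewrite coefB coefXM !coef_lbp_ge // eqSS subrr.
Qed.

Section Recurrence.

Local Notation a := (an m Linv).
Local Notation b := (bn m Linv).
Local Notation tau := (taun m Linv).
Local Notation H := (Hn m Linv).

Hypothesis taun_unit : forall k, tau k \is a GRing.unit.
Hypothesis Hn_unit : forall k, H k \is a GRing.unit.

(* For k = 0 the term [lbp k.-1] is [lbp 0] rather than P_(-1) = 0; this is
   harmless because it always comes multiplied by a_0 = 0. *)

Lemma size_an_lbp k : (size (a k *: lbp k.-1) <= k)%N.
Proof.
by case: k => [|k]; rewrite ?scale0r ?size_poly0 // (leq_trans (size_scale_leq _ _)) ?size_lbp.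
Qed.

Lemma mpair_lbp_pred k (j : nat) : (j < k)%N ->
  a k * mpair (lbp k.-1) (j%:Z - 1) = - mpair (lbp k) (j%:Z - 1).
Proof.
case: k => [//|k]; case: j => [|j] jk.
  by rewrite sub0r !mpair_lbpN1 /= mulrVK.
by rewrite (_ : j.+1%:Z - 1 = j) ?mpair_lbp_lt ?mulr0 ?oppr0 //; lia.
Qed.

Lemma lbp_rec k : 'X * (lbp k + a k *: lbp k.-1) = lbp k.+1 + b k *: lbp k.
Proof.
apply/eqP; rewrite -subr_eq0; apply/eqP.
rewrite mulrDr opprD addrACA addrA.
apply: (@mpair_eq0 k.+1).
  apply: size_polyB_leq; first apply: size_polyD_leq.
  - exact: size_XlbpB.
  - by rewrite (leq_trans (size_polyMleq _ _)) // size_polyX add2n ltnS size_an_lbp.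
  - exact: leq_trans (size_scale_leq _ _) (size_lbp k).
move=> j jk; rewrite !(mpairB, mpairD, mpairXM, mpairZ) mpair_lbp_lt // subr0.
move: jk; rewrite ltnS leq_eqVlt => /orP[/eqP->|jk].
  (* pairing with lambda^k is where the definition of b_k enters *)
  rewrite mpair_lbp_diag; apply/eqP; rewrite subr_eq0; apply/eqP.
  case: k => [|k] /=; first by rewrite mpair_lbpN1 mul0r addr0 divrK.
  rewrite (_ : k.+1%:Z - 1 = k) ?mpair_lbp_diag ?mpair_lbp_lt ?add0r ?divrK //; lia.
by rewrite mpair_lbp_pred ?mpair_lbp_lt ?mulr0 ?subrr.
Qed.

Lemma mpair_lbp_rec k j :
  mpair (lbp k) (j - 1) + a k * mpair (lbp k.-1) (j - 1)
  = mpair (lbp k.+1) j + b k * mpair (lbp k) j.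
Proof. by have := congr1 (mpair^~ j) (lbp_rec k); rewrite mpairXM !(mpairD, mpairZ). Qed.

Lemma mpair_lbp_succ k (j : nat) : (j < k)%N ->
  b k * mpair (lbp k) (j%:Z + 1) = a k * mpair (lbp k.-1) j.
Proof.
move=> jk; have := mpair_lbp_rec k (j%:Z + 1).
rewrite addrK (@mpair_lbp_lt k j jk) add0r (_ : j%:Z + 1 = j.+1); last by lia.
by rewrite (@mpair_lbp_lt k.+1) // add0r => ->.
Qed.

Lemma size_an_XlbpB k : (size (a k *: ('X * lbp k.-1 - lbp k))%R <= k)%N.
Proof.
by case: k => [|k]; rewrite ?scale0r ?size_poly0 // (leq_trans (size_scale_leq _ _)) ?size_XlbpB.
Qed.

Lemma size_lbp_Euler k : (size (lbp k *+ k - 'X * (lbp k)^`())%R <= k)%N.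
Proof.
apply/leq_sizeP => i ki; rewrite coefB coefX_deriv coefMn coef_lbp_ge //.
by case: eqP => [->|_]; rewrite ?mul0rn subrr.
Qed.

Section Evolution.

Variables (d : R -> R) (al0 al1 al2 : R).
Hypothesis dD : forall x y, d (x + y) = d x + d y.
Hypothesis dM : forall x y, d (x * y) = d x * y + x * d y.
Hypothesis al0C : forall x, al0 * x = x * al0.
Hypothesis al1C : forall x, al1 * x = x * al1.
Hypothesis al2C : forall x, al2 * x = x * al2.
Hypothesis dm : forall j : int,
  d (m j) = al0 * j%:~R * m j + al1 * m (j + 1) + al2 * m (j - 1).

Definition flow x y z := al0 * x + al1 * y + al2 * z.

Lemma flowD x y z x' y' z' :
  flow x y z + flow x' y' z' = flow (x + x') (y + y') (z + z').
Proof. by rewrite /flow addrACA (addrACA (al0 * x)) -!mulrDr. Qed.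

Lemma flowMl w x y z : w * flow x y z = flow (w * x) (w * y) (w * z).
Proof. by rewrite /flow !mulrDr !mulrA -al0C -al1C -al2C -!mulrA. Qed.

Lemma flowMr x y z w : flow x y z * w = flow (x * w) (y * w) (z * w).
Proof. by rewrite /flow !mulrDl -!mulrA. Qed.

Lemma flowN x y z : - flow x y z = flow (- x) (- y) (- z).
Proof. by rewrite /flow !mulrN !opprD. Qed.

Lemma d_mpair p j : d (mpair p j) = mpair (map_poly d p) j
  + flow (mpair ('X * p^`()) j - j%:~R * mpair p j) (mpair p (j - 1)) (mpair p (j + 1)).
Proof.
have sXp : (size ('X * p^`())%R <= size p)%N.
  by apply/leq_sizeP => i pi; rewrite coefX_deriv nth_default ?mul0rn.
rewrite (@mpair_widen (size p) (map_poly d p)) ?size_poly //.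
rewrite (@mpair_widen _ _ _ sXp) /flow /mpair (d_sum dD) mulr_sumr -sumrB !mulr_sumr -!big_split.
apply: eq_bigr => i _ /=; rewrite dM dm coef_map_id0 ?(d0 dD) // coefX_deriv.
rewrite !(mulrDr p`_i) -!addrA; congr (_ + (_ + (_ + _))).
- rewrite -mulrA (mulrA p`_i) -al0C -mulrA; congr (_ * _).
  by rewrite intrB -pmulrn mulrBl mulrBr mulr_natl mulrnAr -mulrnAl !mulrzl mulrzAr.
- by rewrite mulrA -al1C -mulrA; congr (_ * (_ * m _)); lia.
- by rewrite mulrA -al2C -mulrA; congr (_ * (_ * m _)); lia.
Qed.

Lemma mpair_d_lbp_lt k (j : nat) : (j < k)%N ->
  mpair (map_poly d (lbp k)) j
  = - flow (mpair ('X * (lbp k)^`()) j) (mpair (lbp k) (j%:Z - 1)) (mpair (lbp k) (j%:Z + 1)).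
Proof.
move=> jk; have := d_mpair (lbp k) j; rewrite mpair_lbp_lt // (d0 dD) mulr0 subr0.
by move/eqP; rewrite eq_sym addr_eq0 => /eqP.
Qed.

Hypothesis bn_unit : forall k, b k \is a GRing.unit.

Lemma lbp_flow k : map_poly d (lbp k) =
  al0 *: (lbp k *+ k - 'X * (lbp k)^`()) + al1 *: (a k *: ('X * lbp k.-1 - lbp k))
  - al2 *: ((b k)^-1 *: (a k *: lbp k.-1)).
Proof.
apply: (@mpair_inj k).
- apply/leq_sizeP => i ki.
  by rewrite coef_map_id0 ?(d0 dD) // coef_lbp_ge // (d_natr dD dM).
- rewrite size_polyB_leq ?size_polyD_leq //.
  + by rewrite (leq_trans (size_scale_leq al0 _)) ?size_lbp_Euler.
  + by rewrite (leq_trans (size_scale_leq al1 _)) ?size_an_XlbpB.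
  rewrite (leq_trans (size_scale_leq al2 _)) // (leq_trans (size_scale_leq (b k)^-1 _)) //.
  exact: size_an_lbp.
move=> j jk; rewrite mpair_d_lbp_lt // !(mpairD, mpairN, mpairZ, mpairXM) -scaler_nat mpairZ.
rewrite mpair_lbp_lt // mulr0 add0r oppr0 addr0 -mulrN flowN -[RHS]/(flow _ _ _).
by rewrite mpair_lbp_pred // -mpair_lbp_succ // mulKr.
Qed.

Lemma d_mpair_lbp k j : d (mpair (lbp k) j) =
  flow ((k%:Z - j)%:~R * mpair (lbp k) j)
       (mpair (lbp k.+1) j + (b k - a k) * mpair (lbp k) j)
       ((b k)^-1 * (mpair (lbp k) j - mpair (lbp k.+1) (j + 1))).
Proof.
rewrite d_mpair lbp_flow !(mpairD, mpairN, mpairZ, mpairXM) -scaler_nat mpairZ -(mulrN al2).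
rewrite -[X in X + flow _ _ _]/(flow _ _ _) flowD; congr flow.
- by rewrite addrA subrK -mulrBl intrB -pmulrn.
- by rewrite mulrDr mulrN addrAC (addrC (a k * _)) mpair_lbp_rec mulrBl addrA.
apply: (mulrI (bn_unit k)); rewrite mulrDr mulrN !mulVKr //.
have := mpair_lbp_rec k (j + 1); rewrite addrK => E.
rewrite -[mpair (lbp k) j](addrK (a k * mpair (lbp k.-1) j)) E.
by rewrite addrAC (addrC (mpair (lbp k.+1) _)) addrK addrC.
Qed.

Definition taun_rate k := flow k.+1%:R (b k - a k - a k.+1) (b k)^-1.
Definition Hn_rate k := flow 0 (b k - a k) ((b k)^-1 * (1 - H k.+1 / H k)).

Lemma d_taun k : d (tau k) = taun_rate k * tau k.
Proof.
rewrite -mpair_lbpN1 d_mpair_lbp addNr mpair_lbp_lt // subr0 !mpair_lbpN1 flowMr.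
congr flow; last by rewrite [RHS]mulrBl /= mulrVK // opprK addrC.
by rewrite (_ : k%:Z - -1 = k.+1) ?pmulrn //; lia.
Qed.

Lemma d_Hn k : d (H k) = Hn_rate k * H k.
Proof.
rewrite -mpair_lbp_diag d_mpair_lbp (@mpair_lbp_lt k.+1) // add0r subrr mul0r flowMr mul0r.
rewrite (_ : k%:Z + 1 = k.+1) ?mpair_lbp_diag; last by lia.
by congr flow; rewrite -mulrA mulrBl mul1r divrK.
Qed.

Lemma Hn_ratio k : H k.+1 / H k = (b k.+1)^-1 * a k.+1.
Proof. by apply: (mulrI (bn_unit k.+1)); rewrite mulVKr ?bn_unit //= mulrA divrK // mulrK. Qed.

Lemma d_an k : d (a k.+1) = taun_rate k.+1 * a k.+1 - a k.+1 * taun_rate k.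
Proof. by apply: (d_mulV dM) => //; rewrite ?(dN dD) d_taun ?mulrN. Qed.

Lemma d_bn k : d (b k.+1) = taun_rate k.+1 * b k.+1 - b k.+1 * Hn_rate k.+1
  + a k.+1 * (Hn_rate k - taun_rate k) * (H k / H k.+1).
Proof.
have -> : b k.+1 = a k.+1 * (H k / H k.+1) by rewrite /= mulrA.
rewrite dM d_an (d_mulV dM _ _ _ _ (Hn_unit _) (d_Hn k) (d_Hn k.+1)).
move: (H k / _) => r; rewrite mulrBl mulrBr mulrBr mulrBl !mulrA.
by rewrite addrACA [RHS]addrACA (addrC (- _)).
Qed.

Lemma toda_an k : d (a k.+1) = flow (a k.+1)
    (- (a k.+2 * a k.+1) + a k.+1 * a k + b k.+1 * a k.+1 - a k.+1 * b k)
    ((b k.+1)^-1 * a k.+1 - a k.+1 * (b k)^-1).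
Proof.
rewrite d_an /taun_rate flowMr flowMl flowN flowD; congr flow.
- by rewrite (commr_nat _ k.+1) -mulrBl -natrB // subSnn mul1r.
move: (a k.+2) (a k.+1) (a k) (b k.+1) (b k) => a2 a1 a0 b1 b0.
rewrite !mulrBl !mulrBr !opprB addrA (addrAC _ (- (a2 * a1))) subrK.
by rewrite addrA (addrC (b1 * a1)) (addrAC (- _)).
Qed.

Lemma toda_bn k : d (b k.+1) = flow (b k.+1)
    (b k.+1 * a k.+1 - a k.+2 * b k.+1)
    ((b k.+2)^-1 * a k.+2 - a k.+1 * (b k)^-1).
Proof.
have ar : a k.+1 * (H k / H k.+1) = b k.+1 by rewrite /= mulrA.
rewrite d_bn /taun_rate /Hn_rate flowMr flowMl !flowN !flowD flowMl flowMr !flowD.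
congr flow.
- rewrite mulr0 subr0 sub0r mulrN mulNr (commr_nat _ k.+1) -mulrA ar.
  by rewrite -mulrBl -natrB // subSnn mul1r.
- rewrite subKr -mulrA ar !mulrBl mulrBr opprB (addrAC (_ - _)).
  by rewrite (addrAC (b k.+1 * b k.+1 - a k.+1 * b k.+1)) subrK addrC subrKA.
rewrite mulVr // mulVKr // subKr Hn_ratio (mulrBr (b k)^-1) mulr1 addrAC subrr add0r.
by rewrite mulrN mulNr -!mulrA mulKr // mulrV // mulr1.
Qed.

End Evolution.

End Recurrence.

End Moments.

Theorem theorem3p3 (R : unitRingType) (d : R -> R) (m : int -> R)
    (Linv : forall n : nat, 'M[R]_n) (al0 al1 al2 : R) :
  (* R is a skew field *)
  (forall x : R, x != 0 -> x \is a GRing.unit) ->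
  (* d/dt is a derivation of R *)
  (forall x y : R, d (x + y) = d x + d y) ->
  (forall x y : R, d (x * y) = d x * y + x * d y) ->
  (* the alpha_i are scalars (central) *)
  (forall x : R, al0 * x = x * al0) ->
  (forall x : R, al1 * x = x * al1) ->
  (forall x : R, al2 * x = x * al2) ->
  al0 != 0 ->
  (forall j : int,
      d (m j) = al0 * j%:~R * m j + al1 * m (j + 1) + al2 * m (j - 1)) ->
  (* Lambda_{n-1} invertible, with inverse Linv n *)
  (forall n : nat, Lam m n *m Linv n = 1%:M /\ Linv n *m Lam m n = 1%:M) ->
  (* the remaining required inverses exist *)
  (forall n : nat, taun m Linv n != 0) ->
  (forall n : nat, Hn m Linv n != 0) ->
  (forall n : nat, bn m Linv n != 0) ->
  forall n : nat, (0 < n)%N ->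
    let a := an m Linv in
    let b := bn m Linv in
    d (a n) = al0 * a n
              + al1 * (- (a n.+1 * a n) + a n * a n.-1 + b n * a n - a n * b n.-1)
              + al2 * ((b n)^-1 * a n - a n * (b n.-1)^-1)
 /\ d (b n) = al0 * b n
              + al1 * (b n * a n - a n.+1 * b n)
              + al2 * ((b n.+1)^-1 * a n.+1 - a n * (b n.-1)^-1).
Proof.
move=> unitP dD dM al0C al1C al2C _ dm LinvP taun_nz Hn_nz bn_nz [//|k] _ a b.
have taun_unit j : taun m Linv j \is a GRing.unit by exact/unitP/taun_nz.
have Hn_unit j : Hn m Linv j \is a GRing.unit by exact/unitP/Hn_nz.
have bn_unit j : bn m Linv j \is a GRing.unit by exact/unitP/bn_nz.
by split; [apply: toda_an | apply: toda_bn].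
Qed.
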